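(* Let $L$ be an oriented, ordered, compatible virtual link diagram with components $L_1,\dots,L_n$, and let $C$ be an affine bilabeling of $L$. Then the multi-variable affine index polynomial $$p_{(L,C)}(t_1,\dots,t_n)=\sum_{c}\operatorname{sgn}(c)\bigl(t_{o(c)}^{W(c)}-1\bigr)$$ is an invariant of the pair $(L,C)$: it is unchanged under classical and virtual Reidemeister moves, where the bilabeling is carried along, i.e. labels on arcs outside the local disc of the move are unchanged. Moreover, this invariant generalizes the earlier affine index polynomials. (i) For every $i$, collapse the starting bilabel of $L_i$ to the single label $A_i=a^{(i)}_1+a^{(i)}_2$ and form Kauffman's compatible-link affine index polynomial $P_L(t)$ from it. Then substituting $t_1=\dots=t_n=t$ gives $p_{(L,C)}(t,\dots,t)=P_L(t)$. (ii) If $n=1$, so that $L=K$ is a virtual knot, then $p_{(K,C)}(t)$ equals the Affine Index Polynomial $P_K(t)$.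
   Context: **Diagrams.** A virtual link diagram is an oriented planar diagram of ordered closed curves $L_1,\dots,L_n$, called components. Its crossings are either classical (with over/under information) or virtual. Diagrams are considered up to the classical and virtual Reidemeister moves. **Crossing conventions.** Draw a classical crossing with both strands oriented upward. - The strand running from bottom-left to top-right has index change $-1$; the strand running from bottom-right to top-left has index change $+1$. - The crossing is positive ($\operatorname{sgn}=+1$) if the overstrand is the bottom-left-to-top-right strand, and negative otherwise. - A classical crossing is a self-crossing if both strands lie on the same component, and external otherwise. - For each component $L_i$, its weight $n_i$ is the sum of the index changes of $L_i$ over all its passages through external classical crossings (its algebraic intersection number with the other components). - $L$ is compatible if $n_i=0$ for all $i$. **Affine bilabeling $C$.** - For each component $L_i$, choose a starting point on it and give it a bilabel $(a^{(i)}_1,a^{(i)}_2)$ of formal integer variables, distinct for different components. - Travel along $L_i$ in its orientation and carry the bilabel along the arcs. It is unchanged at virtual crossings. - On passing through a classical crossing with index change $\varepsilon$, the first entry changes by $\varepsilon$ if the crossing is a self-crossing, and the second entry changes by $\varepsilon$ if it is external. - For compatible $L$, the labels close up consistently. **Crossing weight $W(c)$.** For a bilabel $(x,y)$, put $|(x,y)|=x+y$. Draw $c$ with both strands upward. - If $c$ is positive, $W(c)=|\text{bottom-left label}|-|\text{top-left label}|$. - If $c$ is negative, $W(c)=|\text{bottom-right label}|-|\text{top-right label}|$. **The polynomial.** $o(c)$ denotes the index of the component containing the overstrand of $c$. The sum defining $p_{(L,C)}$ runs over all classical crossings; exponents are integer linear combinations of the variables. Equivalently, $p_{(L,C)}=\sum_c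 \operatorname{sgn}(c)\,t_{o(c)}^{W(c)}-\mathrm{writhe}(L)$. **Kauffman's affine labeling and $P_L(t)$.** - Give each component a single starting label and propagate it by adding the index change at every classical crossing, both self and external. - Weights: for positive $c$, $W(c)=(\text{bottom-left})-(\text{top-left})$; for negative $c$, $W(c)=(\text{bottom-right})-(\text{top-right})$. - $P_L(t)=\sum_c\operatorname{sgn}(c)(t^{W(c)}-1)$. - For a virtual knot $K$, this polynomial is independent of the starting label and is the Affine Index Polynomial $P_K(t)$. *)

From mathcomp Require Import all_boot all_order all_algebra.
From Stdlib Require Export Relations.Relation_Operators.
Set Implicit Arguments. Unset Strict Implicit. Unset Printing Implicit Defensive.
Import GRing.Theory Num.Theory.
Local Open Scope ring_scope.

(* A passage through a classical crossing: (crossing label, is it the over-passage?) *)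
Definition passage := (nat * bool)%type.

(* An ordered, oriented virtual link diagram with n components, given by its
   signed Gauss code: component i is read, from its starting point and along its
   orientation, as the word [gw D i] of passages through classical crossings
   (virtual crossings are invisible).  [gsg D c] is true iff crossing c is
   positive.  The starting point of each component is the beginning of its word. *)
Record gdiag (n : nat) := GDiag { gw : 'I_n -> seq passage; gsg : nat -> bool }.

Section Defs.
Context {n : nat}.
Implicit Types (D : gdiag n).

Definition occ D (x : passage) : nat := (\sum_(i < n) count_mem x (gw D i))%N.

Definition wf D : Prop :=
  forall c : nat, occ D (c, true) = occ D (c, false) /\ (occ D (c, true) <= 1)%N.

Definition crossings D : seq nat :=
  undup (flatten [seq map fst (gw D i) | i <- enum 'I_n]).

Definition sg D (c : nat) : int := if gsg D c then 1 else -1.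

(* index change of a passage: the over strand of a positive crossing runs
   bottom-left to top-right (index change -1), etc. *)
Definition dch D (x : passage) : int := if x.2 then - sg D x.1 else sg D x.1.

Definition is_self D (c : nat) : bool :=
  [exists i : 'I_n, ((c, true) \in gw D i) && ((c, false) \in gw D i)].

Definition weight D (i : 'I_n) : int :=
  \sum_(x <- gw D i | ~~ is_self D x.1) dch D x.

Definition compatible D : Prop := forall i : 'I_n, weight D i = 0.

(* integer linear forms in the formal variables a^(i)_1, a^(i)_2
   (index (i,false), (i,true)); the coefficient at None is the constant term *)
Definition linform := {ffun option ('I_n * bool) -> int}.
Definition lvar (i : 'I_n) (b : bool) : linform := [ffun v => ((v == Some (i, b)) : nat)%:Z].
Definition lcst (z : int) : linform := [ffun v => if v is None then z else 0].

(* bilabel on the arc of L_i after its first k passages *)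
Definition bilab D (i : 'I_n) (k : nat) : linform * linform :=
  (lvar i false + lcst (\sum_(x <- take k (gw D i) | is_self D x.1) dch D x),
   lvar i true + lcst (\sum_(x <- take k (gw D i) | ~~ is_self D x.1) dch D x)).

Definition babs (l : linform * linform) : linform := l.1 + l.2.

(* generic crossing weight: (label on incoming arc of the overstrand) minus
   (label on outgoing arc of the understrand); this is bottom-left minus top-left
   for positive crossings and bottom-right minus top-right for negative ones *)
Definition Wgen (V : zmodType) D (lab : 'I_n -> nat -> V) (c : nat) : V :=
  \sum_(i < n) \sum_(k < size (gw D i) | nth (0%N, false) (gw D i) k == (c, true)) lab i k
  - \sum_(i < n) \sum_(k < size (gw D i) | nth (0%N, false) (gw D i) k == (c, false)) lab i k.+1.

Definition Wbi D (c : nat) : linform := Wgen D (fun i k => babs (bilab D i k)) c.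

(* monomials t_k^e of the group ring; None is the monomial 1 (= t_k^0 for all k) *)
Definition mono := option ('I_n * linform).
Definition mkey (i : 'I_n) (e : linform) : mono := if e == 0 then None else Some (i, e).

(* coefficient of the monomial m in p_(L,C) = sum_c sgn(c) (t_{o(c)}^{W(c)} - 1) *)
Definition pcoef D (m : mono) : int :=
  \sum_(c <- crossings D)
     sg D c * ((\sum_(i < n | (c, true) \in gw D i) ((mkey i (Wbi D c) == m) : nat))%N%:Z
               - ((m == None) : nat)%:Z).

(* specialization t_1 = ... = t_n = t : coefficient of t^e *)
Definition spec (p : mono -> int) (e : linform) : int :=
  if e == 0 then p None else \sum_(i < n) p (Some (i, e)).

(* Kauffman's affine labeling with starting labels st, labels in V, integers
   embedded by inj; coefficient of t^e in P_L(t) = sum_c sgn(c)(t^{W(c)} - 1) *)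
Definition klab (V : zmodType) (inj : int -> V) (st : 'I_n -> V) D (i : 'I_n) (k : nat) : V :=
  st i + inj (\sum_(x <- take k (gw D i)) dch D x).

Definition kpoly (V : zmodType) (inj : int -> V) (st : 'I_n -> V) D (e : V) : int :=
  \sum_(c <- crossings D)
     sg D c * (((Wgen D (klab inj st D) c == e) : nat)%:Z - ((e == 0) : nat)%:Z).

(* ---- Reidemeister moves on Gauss codes (the starting points lie outside the
   disc of the move, so the local pieces are contiguous in the linear words) ---- *)

Definition adj (s : seq passage) (p q : passage) : bool :=
  has (fun k => (k.+1 < size s)%N && (nth (0%N, false) s k == p)
                && (nth (0%N, false) s k.+1 == q)) (iota 0 (size s)).

Definition r1step D (D' : gdiag n) : Prop :=
  exists (c : nat) (b : bool),
    (exists i : 'I_n, adj (gw D i) (c, b) (c, ~~ b)) /\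
    (forall i, gw D' i = [seq x <- gw D i | x.1 != c]) /\
    {in crossings D', gsg D' =1 gsg D}.

Definition r2step D (D' : gdiag n) : Prop :=
  exists c d : nat,
    c != d /\ gsg D c != gsg D d /\
    (exists i : 'I_n, adj (gw D i) (c, true) (d, true)) /\
    (exists j : 'I_n, adj (gw D j) (c, false) (d, false) || adj (gw D j) (d, false) (c, false)) /\
    (forall i, gw D' i = [seq x <- gw D i | (x.1 != c) && (x.1 != d)]) /\
    {in crossings D', gsg D' =1 gsg D}.

Definition seg (s : seq passage) (k : nat) (p q : passage) : bool :=
  (k.+1 < size s)%N &&
  (((nth (0%N, false) s k == p) && (nth (0%N, false) s k.+1 == q)) ||
   ((nth (0%N, false) s k == q) && (nth (0%N, false) s k.+1 == p))).

Definition swp (s : seq passage) (k : nat) : seq passage :=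
  take k s ++ [:: nth (0%N, false) s k.+1; nth (0%N, false) s k] ++ drop k.+2 s.

Definition swp_if (b : bool) (k : nat) (s : seq passage) := if b then swp s k else s.

Definition pm (b : bool) : int := if b then 1 else -1.

(* The sign condition characterizes the triangles that
   occur in the plane (derived from three oriented lines in general position). *)
Definition r3step D (D' : gdiag n) : Prop :=
  exists (i1 i2 i3 : 'I_n) (k1 k2 k3 x y z : nat),
    [&& x != y, y != z & x != z] /\
    seg (gw D i1) k1 (x, true) (y, true) /\
    seg (gw D i2) k2 (x, false) (z, true) /\
    seg (gw D i3) k3 (y, false) (z, false) /\
    (let o1 := nth (0%N, false) (gw D i1) k1 == (x, true) in
     let o2 := nth (0%N, false) (gw D i2) k2 == (x, false) in
     let o3 := nth (0%N, false) (gw D i3) k3 == (y, false) in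
     pm o2 * sg D x = pm o3 * sg D y /\ pm o2 * sg D z = pm o1 * sg D y) /\
    (forall i, gw D' i = swp_if (i == i3) k3 (swp_if (i == i2) k2 (swp_if (i == i1) k1 (gw D i)))) /\
    {in crossings D, gsg D' =1 gsg D}.

Definition rstep D (D' : gdiag n) : Prop := r1step D D' \/ r2step D D' \/ r3step D D'.

Definition rmove D (D' : gdiag n) : Prop := wf D /\ wf D' /\ (rstep D D' \/ rstep D' D).

End Defs.

(* embedding of a one-variable Laurent polynomial (coefficients indexed by
   integer exponents) into the group ring for n = 1 *)
Definition embed1 (Q : int -> int) (m : @mono 1) : int :=
  match m with
  | None => Q 0
  | Some (_, e) => if (e != 0) && (e == lcst (e None)) then Q (e None) else 0
  end.

(* The absolute value x + y of a bilabel only records the total index change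
   along the component, so it is Kauffman's affine label started at
   A_i = a_1 + a_2, and the bilabel weight W(c) is Kauffman's weight.  This
   gives (i), and for a knot the starting labels cancel in W(c), giving (ii).

   For invariance, the label of an arc is its starting label plus the index
   changes of the passages before it, and the starting points lie outside the
   disc of every move.  R1 and R2 delete adjacent pairs of passages whose index
   changes cancel, so the surviving labels do not change; a curl has weight 0,
   and the two crossings of a bigon have equal weights and opposite signs.  R3
   transposes three pairs of adjacent passages; this shifts labels, but the
   sign condition of the move makes the shifts at the over- and at the
   under-passage of every crossing equal, so no weight changes. *)

From HB Require Import structures.
From mathcomp Require Import all_boot all_order all_algebra.
From mathcomp Require Import zify ring.
Import GRing.Theory.
Set Implicit Arguments. Unset Strict Implicit. Unset Printing Implicit Defensive.
Local Open Scope ring_scope.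

Section SeqFacts.
Variable T : eqType.
Implicit Types (s t : seq T) (a b p : T).

Lemma count_le1_uniq s : (forall x, count_mem x s <= 1)%N -> uniq s.
Proof.
move=> le1; apply: count_mem_uniq => x; have := le1 x.
by case: (boolP (x \in s)) => [|/count_memPn ->] //; rewrite -has_pred1 has_count; lia.
Qed.

Lemma big_pred1_uniq (V : nmodType) (F : T -> V) t a : uniq t ->
  \sum_(x <- t | x == a) F x = if a \in t then F a else 0.
Proof.
move=> ut; case: ifP => ta; first by rewrite -big_filter filter_pred1_uniq // big_seq1.
by apply: big1_seq => x /andP [/eqP ->]; rewrite ta.
Qed.

Lemma big_ord_nth_pred1 (V : nmodType) (F : nat -> V) x0 s a : uniq s ->
  \sum_(k < size s | nth x0 s k == a) F k = if a \in s then F (index a s) else 0.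
Proof.
move=> us; case: ifP => sa.
  have ias : (index a s < size s)%N by rewrite index_mem.
  rewrite (bigD1 (Ordinal ias)) /= ?nth_index // big1 ?addr0 // => k /andP [/eqP ka].
  by case/eqP; apply/val_inj; rewrite /= -ka index_uniq.
by apply: big1 => k /eqP ka; rewrite -ka mem_nth in sa.
Qed.

Lemma big_mem_pair_cancel (V : zmodType) (F : T -> V) t a b : uniq t -> a != b ->
  (a \in t) = (b \in t) -> F a + F b = 0 -> \sum_(x <- t | x \in [:: a; b]) F x = 0.
Proof.
move=> ut ab tab Fab; rewrite (bigID (pred1 a)) /=.
rewrite (eq_bigl (fun x => x == a)) => [|x]; last by rewrite !inE andbC; case: (x == a).
rewrite [X in _ + X](eq_bigl (fun x => x == b)) => [|x]; last first.
  by rewrite !inE; have [->|] := eqVneq x a; rewrite ?(negbTE ab) ?andbT.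
by rewrite !big_pred1_uniq // -tab; case: ifP; rewrite ?addr0.
Qed.

Lemma big_pred_or (V : nmodType) (F : T -> V) t (P Q : pred T) :
  (forall x, ~~ (P x && Q x)) ->
  \sum_(x <- t | P x || Q x) F x = \sum_(x <- t | P x) F x + \sum_(x <- t | Q x) F x.
Proof.
move=> PQ; rewrite (bigID P) /=; congr (_ + _); apply: eq_bigl => x.
  by case: (P x); rewrite ?andbF.
by have := PQ x; case: (P x); case: (Q x).
Qed.

Lemma take_index_filter (P : pred T) s p : P p ->
  take (index p (filter P s)) (filter P s) = filter P (take (index p s) s).
Proof.
move=> Pp; elim: s => //= x s IH; case: (x =P p) => [-> | /eqP nxp].
  by rewrite Pp /= eqxx !take0.
by case Px: (P x); rewrite /= ?(negbTE nxp) /= ?Px IH.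
Qed.

Definition consec s (k : nat) a b : Prop :=
  [/\ a \in s, b \in s, index a s = k & index b s = k.+1].

Lemma mem_take_index_consec s k a b p : uniq s -> consec s k a b ->
  p != a -> p != b -> (a \in take (index p s) s) = (b \in take (index p s) s).
Proof.
move=> us [sa sb ia ib] pa pb.
have kb : (k.+1 < size s)%N by rewrite -ib index_mem.
rewrite !in_take // ia ib; have [ps | ps] := boolP (p \in s); last by rewrite memNindex //; lia.
have nia : index p s != k by rewrite -ia; apply: contra pa => /eqP/(index_inj p ps sa) ->.
have nib : index p s != k.+1 by rewrite -ib; apply: contra pb => /eqP/(index_inj p ps sb) ->.
by move: nia nib; lia.
Qed.

Lemma consec_nth x0 s k : uniq s -> (k.+1 < size s)%N -> consec s k (nth x0 s k) (nth x0 s k.+1).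
Proof. by move=> us kb; have ks := ltnW kb; split; rewrite ?mem_nth ?index_uniq. Qed.

Definition prefix_sum (V : zmodType) (F : T -> V) s p : V :=
  \sum_(x <- take (index p s) s) F x.

Lemma eq_prefix_sum (V : zmodType) (F G : T -> V) s p :
  {in s, F =1 G} -> prefix_sum F s p = prefix_sum G s p.
Proof. by move=> FG; apply: eq_big_seq => x /mem_take /FG. Qed.

Lemma prefix_sum_consec (V : zmodType) (F : T -> V) s k a b : uniq s -> consec s k a b ->
  prefix_sum F s b = prefix_sum F s a + F a.
Proof.
move=> us [sa _ ia ib]; rewrite /prefix_sum ib -ia (take_nth a) ?index_mem //.
by rewrite -cats1 big_cat big_seq1 nth_index.
Qed.

End SeqFacts.

Lemma uniq_notin_pair (T : eqType) (a b z : T) r : uniq [:: a, b & r] -> z \in r ->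
  z \notin [:: a; b].
Proof.
rewrite /= !inE negb_or => /and3P [/andP [_ ar] br _] zr.
by rewrite negb_or; apply/andP; split; apply: contraTneq zr => ->.
Qed.

Section AdjacentSwap.
Variable V : zmodType.
Implicit Types (s : seq passage) (F : passage -> V) (a b p : passage).

(* The change of the prefix sum before [p] when adjacent [a] and [b] are swapped. *)
Definition swap_shift F a b p : V := (if p == a then F b else 0) - (if p == b then F a else 0).

Lemma swap_shift_out F a b p : p != a -> p != b -> swap_shift F a b p = 0.
Proof. by rewrite /swap_shift => /negbTE -> /negbTE ->; rewrite subrr. Qed.

Lemma swap_shiftC F a b p : swap_shift F b a p = - swap_shift F a b p.
Proof. by rewrite /swap_shift opprB. Qed.

Lemma guarded_swap_shift (g : bool) F a b p : (p == a -> g) -> (p == b -> g) ->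
  (if g then swap_shift F a b p else 0) = swap_shift F a b p.
Proof.
by case: g => // pa pb; rewrite swap_shift_out //; apply/negP; [move/pa | move/pb].
Qed.

Lemma index_swap_cat s1 s2 a b p : p != a -> p != b ->
  index p (s1 ++ b :: a :: s2) = index p (s1 ++ a :: b :: s2).
Proof. by rewrite !index_cat /= ![_ == p]eq_sym => /negbTE -> /negbTE ->. Qed.

Lemma prefix_sum_swap_cat F s1 s2 a b p : uniq (s1 ++ a :: b :: s2) -> p \in s1 ++ a :: b :: s2 ->
  prefix_sum F (s1 ++ b :: a :: s2) p = prefix_sum F (s1 ++ a :: b :: s2) p + swap_shift F a b p.
Proof.
rewrite cat_uniq => /and3P [_ /hasPn notin1]; rewrite !cons_uniq in_cons negb_or.
case/and3P => /andP [ab a2] b2 _.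
have [a1 b1] : a \notin s1 /\ b \notin s1 by split; apply: notin1; rewrite !inE eqxx ?orbT.
rewrite /prefix_sum !index_cat mem_cat; case: ifP => [p1 _ | _ /= p2].
  rewrite swap_shift_out ?addr0 ?takel_cat ?index_size //.
    by apply: contraTneq p1 => ->.
  by apply: contraTneq p1 => ->.
rewrite !take_cat !ltnNge !leq_addr /= !addKn !big_cat -addrA /=; congr (_ + _).
rewrite /swap_shift; move: p2; rewrite !inE => /or3P [/eqP-> | /eqP-> | p2].
- by rewrite !eqxx [b == a]eq_sym (negbTE ab) /= ?big_seq1 ?big_nil ?subr0 ?add0r.
- by rewrite !eqxx [b == a]eq_sym (negbTE ab) /= ?big_seq1 ?big_nil ?sub0r ?add0r ?addrN.
have [pa pb] : a != p /\ b != p by split; apply: contraTneq p2 => <-.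
rewrite (negbTE pa) (negbTE pb) eq_sym (negbTE pa) eq_sym (negbTE pb) /=.
by rewrite !big_cons subr0 addr0 addrCA.
Qed.

Lemma swp_consec s k a b : uniq s -> consec s k a b ->
  [/\ perm_eq (swp s k) s,
      forall p, p != a -> p != b -> index p (swp s k) = index p s &
      forall F p, p \in s -> prefix_sum F (swp s k) p = prefix_sum F s p + swap_shift F a b p].
Proof.
move=> us [sa sb ia ib]; have kb : (k.+1 < size s)%N by rewrite -ib index_mem.
have na : nth (0%N, false) s k = a by rewrite -ia nth_index.
have nb : nth (0%N, false) s k.+1 = b by rewrite -ib nth_index.
have sE : s = take k s ++ a :: b :: drop k.+2 s.
  rewrite -{1}(cat_take_drop k s) (drop_nth (0%N, false)) ?(ltnW kb) // na.
  by rewrite (drop_nth (0%N, false)) ?nb.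
have -> : swp s k = take k s ++ b :: a :: drop k.+2 s by rewrite /swp na nb.
move: (take k s) (drop k.+2 s) sE => s1 s2 ->{sa sb ia ib kb na nb} in us *.
split => [|p|F p]; first by rewrite perm_cat2l (perm_catCA [:: b] [:: a]).
  exact: index_swap_cat.
exact: prefix_sum_swap_cat.
Qed.

Lemma swp_if_consec s (g : bool) k a b : uniq s -> (g -> consec s k a b) ->
  [/\ perm_eq (swp_if g k s) s,
      forall p, p != a -> p != b -> index p (swp_if g k s) = index p s &
      forall F p, p \in s -> prefix_sum F (swp_if g k s) p
                           = prefix_sum F s p + (if g then swap_shift F a b p else 0)].
Proof.
case: g => /= us; first by move/(_ isT); apply: swp_consec.
by move=> _; split => // F p _; rewrite addr0.
Qed.

Lemma consec_swp_if s (g : bool) k a b k' a' b' : uniq s -> (g -> consec s k a b) ->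
  consec s k' a' b' -> a' \notin [:: a; b] -> b' \notin [:: a; b] ->
  consec (swp_if g k s) k' a' b'.
Proof.
move=> us gab [sa sb ia ib]; rewrite !inE !negb_or => /andP [a'a a'b] /andP [b'a b'b].
have [perm indexE _] := swp_if_consec us gab.
by split; rewrite ?(perm_mem perm) ?indexE.
Qed.

Lemma swp_if3_consec s (g1 g2 g3 : bool) k1 k2 k3 a1 b1 a2 b2 a3 b3 :
  uniq s -> uniq [:: a1; b1; a2; b2; a3; b3] ->
  (g1 -> consec s k1 a1 b1) -> (g2 -> consec s k2 a2 b2) -> (g3 -> consec s k3 a3 b3) ->
  let s' := swp_if g3 k3 (swp_if g2 k2 (swp_if g1 k1 s)) in
  perm_eq s' s /\ forall F p, p \in s -> prefix_sum F s' p = prefix_sum F s p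
    + (if g1 then swap_shift F a1 b1 p else 0) + (if g2 then swap_shift F a2 b2 p else 0)
    + (if g3 then swap_shift F a3 b3 p else 0).
Proof.
move=> us U c1 c2 c3 s'; have /andP [_ /andP [_ U2]] := U.
have out1 z : z \in [:: a2; b2; a3; b3] -> z \notin [:: a1; b1] := uniq_notin_pair U.
have out2 z : z \in [:: a3; b3] -> z \notin [:: a2; b2] := uniq_notin_pair U2.
have [perm1 _ shift1] := swp_if_consec us c1.
have us1 : uniq (swp_if g1 k1 s) by rewrite (perm_uniq perm1).
have c2' : g2 -> consec (swp_if g1 k1 s) k2 a2 b2.
  by move/c2/(consec_swp_if us c1); apply; apply: out1; rewrite !inE eqxx ?orbT.
have [perm2 _ shift2] := swp_if_consec us1 c2'.
have us2 : uniq (swp_if g2 k2 (swp_if g1 k1 s)) by rewrite (perm_uniq perm2).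
have c3' : g3 -> consec (swp_if g2 k2 (swp_if g1 k1 s)) k3 a3 b3.
  move/c3/(consec_swp_if us c1) => c3'.
  by apply: (consec_swp_if us1 c2'); [apply: c3' | apply: out2..]; rewrite ?out1 // !inE eqxx ?orbT.
have [perm3 _ shift3] := swp_if_consec us2 c3'.
split=> [|F p ps]; first by rewrite (perm_trans perm3) // (perm_trans perm2).
by rewrite shift3 ?shift2 ?shift1 ?(perm_mem perm2) ?(perm_mem perm1) // !addrA.
Qed.

End AdjacentSwap.

Section Diagrams.
Variable n : nat.
Implicit Types (D : gdiag n) (i j : 'I_n) (x p : passage).

Lemma count_le_occ D i x : (count_mem x (gw D i) <= occ D x)%N.
Proof. by rewrite /occ (bigD1 i) //= leq_addr. Qed.

Lemma occ_gt0 D x : (0 < occ D x)%N -> exists i, x \in gw D i.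
Proof.
move=> pos; apply/existsP; apply: contraLR pos => /existsPn none.
by rewrite -leqNgt leqn0 /occ; apply/eqP/big1 => i _; apply/count_memPn/none.
Qed.

Lemma mem_crossings D i x : x \in gw D i -> x.1 \in crossings D.
Proof. by move=> xi; rewrite mem_undup; apply/flatten_mapP; exists i; rewrite ?mem_enum ?map_f. Qed.

Lemma crossingsP D c : reflect (exists i b, (c, b) \in gw D i) (c \in crossings D).
Proof.
apply: (iffP idP) => [|[i [b /mem_crossings //]]].
by rewrite mem_undup => /flatten_mapP [i _ /mapP [[c' b] cb ->]]; exists i, b.
Qed.

Lemma eq_crossings D D' : (forall i, gw D' i =i gw D i) -> crossings D' =i crossings D.
Proof.
move=> DD' c; apply/crossingsP/crossingsP => -[i [b cb]]; exists i, b; by rewrite ?DD' // -DD'.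
Qed.

Lemma dch_congr D D' x : gsg D' x.1 = gsg D x.1 -> dch D' x = dch D x.
Proof. by rewrite /dch /sg => ->. Qed.

Lemma adj_consec (s : seq passage) a b : uniq s -> adj s a b -> consec s (index a s) a b.
Proof.
move=> us /hasP [k _ /andP [/andP [kb /eqP ka] /eqP kb']].
have := consec_nth (0%N, false) us kb; rewrite ka kb' => abk.
by have [_ _ -> _] := abk.
Qed.

Lemma seg_consec (s : seq passage) k p q : uniq s -> p != q -> seg s k p q ->
  let o := nth (0%N, false) s k == p in consec s k (if o then p else q) (if o then q else p).
Proof.
move=> us pq /andP [kb sq]; have := consec_nth (0%N, false) us kb.
by case/orP: sq => /andP [/eqP -> /eqP ->]; rewrite ?eqxx // eq_sym (negbTE pq).
Qed.

Section WellFormed.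
Variable D : gdiag n.
Hypothesis wfD : wf D.

Lemma wf_occ_le1 x : (occ D x <= 1)%N.
Proof. by case: x => c b; have [oc le1] := wfD c; case: b; rewrite // -oc. Qed.

Lemma wf_uniq i : uniq (gw D i).
Proof. by apply: count_le1_uniq => x; apply: leq_trans (count_le_occ D i x) (wf_occ_le1 x). Qed.

Lemma wf_comp_eq x i j : x \in gw D i -> x \in gw D j -> i = j.
Proof.
move=> xi xj; apply/eqP/negPn/negP => ij; have := wf_occ_le1 x.
rewrite /occ (bigD1 i) // (bigD1 j) /=; last by rewrite eq_sym ij.
move: xi xj; rewrite -!has_pred1 !has_count.
by set ci := count _ (gw D i); set cj := count _ (gw D j); set rest := (\sum_(_ < _ | _) _)%N; lia.
Qed.

Lemma big_mem_gw (R : Type) (idx : R) (op : Monoid.com_law idx) x i (F : 'I_n -> R) :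
  x \in gw D i -> \big[op/idx]_(j < n | x \in gw D j) F j = F i.
Proof.
move=> xi; rewrite (bigD1 i) //= big1 ?Monoid.mulm1 // => j /andP [xj /negP []].
by rewrite (wf_comp_eq xj xi).
Qed.

Lemma wf_crossing_passages c : c \in crossings D ->
  (exists i, (c, true) \in gw D i) /\ (exists j, (c, false) \in gw D j).
Proof.
case/crossingsP => i [b cb]; have [oc _] := wfD c.
have pos : (0 < occ D (c, b))%N.
  by apply: leq_trans (count_le_occ D i (c, b)); rewrite -has_count has_pred1.
by split; apply: occ_gt0; case: b pos {cb}; rewrite ?oc // -oc.
Qed.

Lemma Wgen_at (V : zmodType) (lab : 'I_n -> nat -> V) c i j :
  (c, true) \in gw D i -> (c, false) \in gw D j ->
  Wgen D lab c = lab i (index (c, true) (gw D i)) - lab j (index (c, false) (gw D j)).+1.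
Proof.
move=> ci cj; rewrite /Wgen.
under eq_bigr do rewrite big_ord_nth_pred1 ?wf_uniq //.
under [X in _ - X]eq_bigr do rewrite (big_ord_nth_pred1 (fun k => lab _ k.+1)) ?wf_uniq //.
by rewrite -!big_mkcond (big_mem_gw _ _ ci) (big_mem_gw _ _ cj).
Qed.

Lemma wf_take_index_adj i a b l p : adj (gw D i) a b -> p \in gw D l -> p != a -> p != b ->
  (a \in take (index p (gw D l)) (gw D l)) = (b \in take (index p (gw D l)) (gw D l)).
Proof.
move=> /(adj_consec (wf_uniq i)) abi pl pa pb; have [ai bi _ _] := abi.
have [-> | /eqP li] := eqVneq l i; first exact: mem_take_index_consec (wf_uniq i) abi pa pb.
by apply/idP/idP => /mem_take => [/wf_comp_eq/(_ ai) | /wf_comp_eq/(_ bi)].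
Qed.

Lemma wf_guarded_swap_shift (F : passage -> int) i l k a b p : p \in gw D i ->
  consec (gw D l) k a b -> (if i == l then swap_shift F a b p else 0) = swap_shift F a b p.
Proof.
move=> pi [al bl _ _]; apply: guarded_swap_shift => /eqP pE; apply/eqP.
  by apply: wf_comp_eq pi _; rewrite pE.
by apply: wf_comp_eq pi _; rewrite pE.
Qed.

End WellFormed.
End Diagrams.

Section Labels.
Variable n : nat.
Implicit Types (D : gdiag n) (i j : 'I_n) (p : passage).

Lemma lcst_is_zmod_morphism : zmod_morphism (@lcst n).
Proof. by move=> a b; apply/ffunP => -[v|]; rewrite !ffunE ?subr0. Qed.

HB.instance Definition _ :=
  GRing.isZmodMorphism.Build int (@linform n) (@lcst n) lcst_is_zmod_morphism.

Lemma lcst_inj : injective (@lcst n).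
Proof. by move=> a b /ffunP /(_ None); rewrite !ffunE. Qed.

Lemma lcstK a : (@lcst n a) None = a.
Proof. by rewrite ffunE. Qed.

Definition astart i : linform := lvar i false + lvar i true.

Lemma eq_Wgen (V : zmodType) D (lab lab' : 'I_n -> nat -> V) c :
  (forall i k, lab i k = lab' i k) -> Wgen D lab c = Wgen D lab' c.
Proof.
move=> ll'; rewrite /Wgen; under eq_bigr do under eq_bigr do rewrite ll'.
by under [X in _ - X]eq_bigr do under eq_bigr do rewrite ll'.
Qed.

Lemma babs_bilab D i k : babs (bilab D i k) = klab lcst astart D i k.
Proof.
by rewrite /babs /klab /= [in RHS](bigID (fun x => is_self D x.1)) raddfD addrACA.
Qed.

Lemma Wbi_klab D c : Wbi D c = Wgen D (klab lcst astart D) c.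
Proof. exact: eq_Wgen (babs_bilab D). Qed.

(* Constant part of the label on the arc of component [i] arriving at [p]. *)
Definition inlab D i p : int := prefix_sum (dch D) (gw D i) p.

Lemma Wgen_klab_at (V : zmodType) (inj : int -> V) st D c i j : wf D ->
  (c, true) \in gw D i -> (c, false) \in gw D j ->
  Wgen D (klab inj st D) c =
  st i + inj (inlab D i (c, true)) - (st j + inj (inlab D j (c, false) + dch D (c, false))).
Proof.
move=> wfD ci cj; rewrite (Wgen_at wfD _ ci cj) /klab (take_nth (c, false)) ?index_mem //.
by rewrite -cats1 big_cat big_seq1 nth_index.
Qed.

Lemma Wbi_at D c i j : wf D -> (c, true) \in gw D i -> (c, false) \in gw D j ->
  Wbi D c = astart i - astart j
            + lcst (inlab D i (c, true) - inlab D j (c, false) - dch D (c, false)).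
Proof.
move=> wfD ci cj; rewrite Wbi_klab (Wgen_klab_at _ _ wfD ci cj).
set a := inlab D i _; set b := inlab D j _; set d := dch D _.
by rewrite -(addrA a) -opprD (raddfB (@lcst n)) opprD addrACA.
Qed.

End Labels.

Arguments astart {n} i.
Arguments lcst_inj {n}.

Section Polynomial.
Variable n : nat.
Implicit Types (D : gdiag n) (i j : 'I_n) (m : @mono n).

Lemma mkey_eqNone i e : (mkey i e == None) = (e == 0).
Proof. by rewrite /mkey; case: (e == 0). Qed.

Lemma mkey_eqSome i j e f : (mkey i e == Some (j, f)) = [&& e != 0, i == j & e == f].
Proof. by rewrite /mkey; case: (e == 0). Qed.

Definition pcoef_term D c m : int :=
  sg D c * ((\sum_(i < n | (c, true) \in gw D i) ((mkey i (Wbi D c) == m) : nat))%N%:Z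
            - ((m == None) : nat)%:Z).

Lemma pcoefE D m : pcoef D m = \sum_(c <- crossings D) pcoef_term D c m.
Proof. by []. Qed.

Lemma pcoef_term_at D c m i : wf D -> (c, true) \in gw D i ->
  pcoef_term D c m = sg D c * (((mkey i (Wbi D c) == m) : nat)%:Z - ((m == None) : nat)%:Z).
Proof. by move=> wfD ci; rewrite /pcoef_term (big_mem_gw wfD _ _ ci). Qed.

Lemma pcoef_term_eq D D' c m i j : wf D -> wf D' -> gsg D' c = gsg D c ->
  (c, true) \in gw D i -> (c, true) \in gw D' i ->
  (c, false) \in gw D j -> (c, false) \in gw D' j ->
  inlab D' i (c, true) - inlab D' j (c, false) = inlab D i (c, true) - inlab D j (c, false) ->
  pcoef_term D' c m = pcoef_term D c m.
Proof.
move=> wfD wfD' sgc ci ci' cj cj' inlabE.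
rewrite (pcoef_term_at _ wfD ci) (pcoef_term_at _ wfD' ci') (Wbi_at wfD ci cj).
by rewrite (Wbi_at wfD' ci' cj') inlabE (@dch_congr _ D D' (c, false) sgc) /sg sgc.
Qed.

Lemma spec_pcoef D e : wf D -> spec (pcoef D) e = kpoly lcst astart D e.
Proof.
move=> wfD; rewrite /kpoly; under eq_bigr do rewrite -Wbi_klab.
rewrite /spec; have [-> | e0] := eqVneq e 0.
  apply: eq_big_seq => c /(wf_crossing_passages wfD) [[i ci] _].
  by rewrite -/(pcoef_term D c None) (pcoef_term_at _ wfD ci) mkey_eqNone.
rewrite exchange_big /=; apply: eq_big_seq => c /(wf_crossing_passages wfD) [[i ci] _].
under eq_bigr do rewrite (big_mem_gw wfD _ _ ci) mkey_eqSome subr0.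
rewrite -mulr_sumr subr0; congr (_ * _).
rewrite (bigD1 i) //= big1 ?addr0 => [|j ji]; last by rewrite [i == j]eq_sym (negbTE ji) andbF.
by rewrite eqxx /=; have [->|] := eqVneq (Wbi D c) e; rewrite ?e0 ?andbF.
Qed.

End Polynomial.

Lemma knot_Wbi (K : gdiag 1) (s : int) c : wf K -> c \in crossings K ->
  Wbi K c = lcst (Wgen K (klab id (fun=> s) K) c).
Proof.
move=> wfK /(wf_crossing_passages wfK) [[i ci] [j cj]]; have ij : i = j by rewrite !ord1.
rewrite (Wbi_at wfK ci cj) (Wgen_klab_at _ _ wfK ci cj) -ij subrr add0r.
by congr lcst; lia.
Qed.

Lemma pcoef_knot (K : gdiag 1) (s : int) m : wf K ->
  pcoef K m = embed1 (kpoly id (fun=> s) K) m.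
Proof.
move=> wfK; have WbiE c := @knot_Wbi K s c wfK.
rewrite /pcoef /embed1 /kpoly; case: m => [[i e]|]; last first.
  apply: eq_big_seq => c cK; have [[j cj] _] := wf_crossing_passages wfK cK.
  by rewrite (big_mem_gw wfK _ _ cj) mkey_eqNone WbiE // -(raddf0 (@lcst 1)) (inj_eq lcst_inj).
case: ifP => [/andP [e0 /eqP eE] | econst]; last first.
  apply: big1_seq => c /andP [_ cK]; have [[j cj] _] := wf_crossing_passages wfK cK.
  rewrite (big_mem_gw wfK _ _ cj) mkey_eqSome WbiE //.
  case: (boolP [&& _, _ & _]) => [/and3P [W0 _ /eqP We] | _]; last by rewrite subr0 mulr0.
  by move: econst; rewrite -We W0 lcstK eqxx.
have a0 : e None != 0 by apply: contraNneq e0 => a0; rewrite eE a0 raddf0.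
apply: eq_big_seq => c cK; have [[j cj] _] := wf_crossing_passages wfK cK.
rewrite (big_mem_gw wfK _ _ cj) mkey_eqSome !ord1 eqxx /= WbiE // eE lcstK (negbTE a0) subr0.
rewrite -(raddf0 (@lcst 1)) !(inj_eq lcst_inj).
by have [->|] := eqVneq (Wgen K (klab id (fun=> s) K) c) (e None); rewrite ?a0 ?andbF.
Qed.

Section FilterMove.
Variables (n : nat) (D D' : gdiag n) (keep : pred nat).
Hypotheses (wfD : wf D) (wfD' : wf D').
Hypothesis gwD' : forall i, gw D' i = [seq x <- gw D i | keep x.1].
Hypothesis gsgD' : {in crossings D', gsg D' =1 gsg D}.
Hypothesis removed_cancel : forall i p, keep p.1 -> p \in gw D i ->
  \sum_(x <- take (index p (gw D i)) (gw D i) | ~~ keep x.1) dch D x = 0.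

Lemma crossings_filter : crossings D' =i [seq c <- crossings D | keep c].
Proof.
move=> c; rewrite mem_filter; apply/crossingsP/andP => [[i [b]] | [kc /crossingsP [i [b cb]]]].
  by rewrite gwD' mem_filter /= => /andP [kc cb]; split; last by apply/crossingsP; exists i, b.
by exists i, b; rewrite gwD' mem_filter kc.
Qed.

Lemma mem_gw_filter i c b : keep c -> ((c, b) \in gw D' i) = ((c, b) \in gw D i).
Proof. by move=> kc; rewrite gwD' mem_filter kc. Qed.

Lemma inlab_filter i p : keep p.1 -> p \in gw D i -> inlab D' i p = inlab D i p.
Proof.
move=> kp pi; rewrite /inlab (@eq_prefix_sum _ _ _ (dch D)) => [|x xi']; last first.
  by apply/dch_congr/gsgD'; apply: mem_crossings xi'.
rewrite /prefix_sum gwD' take_index_filter // big_filter.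
by rewrite [RHS](bigID (fun x => keep x.1)) /= removed_cancel // addr0.
Qed.

Lemma pcoef_term_filter c m : keep c -> c \in crossings D -> pcoef_term D' c m = pcoef_term D c m.
Proof.
move=> kc cD; have [[i ci] [j cj]] := wf_crossing_passages wfD cD.
have cD' : c \in crossings D' by rewrite crossings_filter mem_filter kc.
by apply: (pcoef_term_eq m wfD wfD' (gsgD' cD') ci _ cj); rewrite ?mem_gw_filter ?inlab_filter.
Qed.

Lemma pcoef_filter m :
  pcoef D m = pcoef D' m + \sum_(c <- crossings D | ~~ keep c) pcoef_term D c m.
Proof.
rewrite !pcoefE (bigID keep) /=; congr (_ + _).
have perm : perm_eq (crossings D') [seq c <- crossings D | keep c].
  by apply: uniq_perm; rewrite ?filter_uniq ?undup_uniq //; apply: crossings_filter.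
rewrite (perm_big _ perm) -big_filter; apply: eq_big_seq => c.
rewrite mem_filter => /andP [kc cD].
exact/esym/pcoef_term_filter.
Qed.

End FilterMove.

Section CurlBigon.
Variable n : nat.
Implicit Types (D : gdiag n).

Lemma fst_eq_mem (x : passage) c : (x.1 == c) = (x \in [:: (c, true); (c, false)]).
Proof. by case: x => c' [|]; rewrite !inE !xpair_eqE ?andbT ?andbF ?orbF. Qed.

Lemma dch_pair D c : dch D (c, true) + dch D (c, false) = 0.
Proof. exact: addNr. Qed.

Lemma curl_Wbi D i c b : wf D -> adj (gw D i) (c, b) (c, ~~ b) -> Wbi D c = 0.
Proof.
move=> wfD /(adj_consec (wf_uniq wfD i)) cc; have [ci ci' _ _] := cc.
have := prefix_sum_consec (dch D) (wf_uniq wfD i) cc.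
case: b cc ci ci' => /= cc ci ci' inlabE.
  rewrite (Wbi_at wfD ci ci') subrr add0r /inlab inlabE opprD addrA subrr add0r.
  by rewrite -opprD dch_pair oppr0 raddf0.
rewrite (Wbi_at wfD ci' ci) subrr add0r /inlab inlabE.
by rewrite addrAC addrK subrr raddf0.
Qed.

Lemma r1step_pcoef D D' m : wf D -> wf D' -> r1step D D' -> pcoef D m = pcoef D' m.
Proof.
move=> wfD wfD' [c [b [[i cc] [gwD' gsgD']]]].
have removed_cancel l p : p.1 != c -> p \in gw D l ->
    \sum_(x <- take (index p (gw D l)) (gw D l) | ~~ (x.1 != c)) dch D x = 0.
  move=> pc pl; under eq_bigl do rewrite negbK fst_eq_mem.
  have pcb b' : p != (c, b') by apply: contra pc => /eqP ->.
  apply: big_mem_pair_cancel; rewrite ?take_uniq ?wf_uniq ?xpair_eqE ?andbF ?dch_pair //.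
  by case: b cc => cc; [|apply/esym]; apply: wf_take_index_adj cc pl (pcb _) (pcb _).
rewrite (@pcoef_filter _ D D' (fun x => x != c) wfD wfD' gwD' gsgD' removed_cancel).
rewrite (eq_bigl (pred1 c)) => [|x]; last exact: negbK.
have [ci ci' _ _] := adj_consec (wf_uniq wfD i) cc.
have {}ci : (c, true) \in gw D i by case: b ci ci' {cc}.
rewrite big_pred1_uniq ?undup_uniq // (mem_crossings ci) (pcoef_term_at m wfD ci).
by rewrite (curl_Wbi wfD cc) /mkey eqxx [m == None]eq_sym subrr mulr0 addr0.
Qed.

Lemma sg_opp D c d : gsg D c != gsg D d -> sg D d = - sg D c.
Proof. by rewrite /sg; case: (gsg D c); case: (gsg D d). Qed.

Lemma bigon_Wbi D i j c d : wf D -> gsg D c != gsg D d ->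
  adj (gw D i) (c, true) (d, true) ->
  adj (gw D j) (c, false) (d, false) || adj (gw D j) (d, false) (c, false) ->
  Wbi D d = Wbi D c.
Proof.
move=> wfD /sg_opp sgd /(adj_consec (wf_uniq wfD i)) over under.
have [ci di _ _] := over; have dtE := prefix_sum_consec (dch D) (wf_uniq wfD i) over.
case/orP: under => /(adj_consec (wf_uniq wfD j)) under; have [u1 u2 _ _] := under;
  have ufE := prefix_sum_consec (dch D) (wf_uniq wfD j) under.
  rewrite (Wbi_at wfD ci u1) (Wbi_at wfD di u2) /inlab dtE ufE /dch /= sgd.
  by congr (_ + lcst _); ring.
rewrite (Wbi_at wfD ci u2) (Wbi_at wfD di u1) /inlab dtE ufE /dch /= sgd.
by congr (_ + lcst _); ring.
Qed.

Lemma fst_eq2_mem (x : passage) c d : ~~ ((x.1 != c) && (x.1 != d)) =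
  (x \in [:: (c, true); (d, true)]) || (x \in [:: (c, false); (d, false)]).
Proof.
case: x => y [|]; rewrite negb_and !negbK !inE !xpair_eqE ?eqb_id ?eqbF_neg /=;
  by rewrite ?andbT ?andbF ?orbF.
Qed.

Lemma r2step_pcoef D D' m : wf D -> wf D' -> r2step D D' -> pcoef D m = pcoef D' m.
Proof.
move=> wfD wfD' [c [d [cd [sgcd [[i over] [[j under] [gwD' gsgD']]]]]]].
pose keep y := (y != c) && (y != d).
have sgd := sg_opp sgcd.
have removed_cancel l p : keep p.1 -> p \in gw D l ->
    \sum_(x <- take (index p (gw D l)) (gw D l) | ~~ keep x.1) dch D x = 0.
  move=> kp pl; have ut := take_uniq (index p (gw D l)) (wf_uniq wfD l).
  have pc b : p != (c, b) by apply: contraTneq kp => ->; rewrite /keep eqxx.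
  have pd b : p != (d, b) by apply: contraTneq kp => ->; rewrite /keep eqxx andbF.
  under eq_bigl do rewrite fst_eq2_mem.
  rewrite big_pred_or => [|[y b]]; last by case: b; rewrite !inE !xpair_eqE ?andbF ?orbF.
  rewrite !big_mem_pair_cancel ?addr0 ?xpair_eqE ?andbT // ?(wf_take_index_adj wfD over) //.
  - by case/orP: under => under; [|apply/esym]; apply: wf_take_index_adj under pl _ _.
  - by rewrite /dch /= sgd addrN.
  - by rewrite /dch /= sgd opprK addNr.
rewrite (@pcoef_filter _ D D' keep wfD wfD' gwD' gsgD' removed_cancel).
rewrite (eq_bigl (fun y => (y == c) || (y == d))) => [|y]; last by rewrite /keep negb_and !negbK.
rewrite big_pred_or => [|y]; last by case: (y =P c) => [->|] //; rewrite (negbTE cd).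
have [ci di _ _] := adj_consec (wf_uniq wfD i) over.
rewrite !big_pred1_uniq ?undup_uniq // (mem_crossings ci) (mem_crossings di).
rewrite (pcoef_term_at m wfD ci) (pcoef_term_at m wfD di) (bigon_Wbi wfD sgcd over under).
by rewrite sgd mulNr addrN addr0.
Qed.

End CurlBigon.

Lemma pcoef_shift n (D D' : gdiag n) (shift : passage -> int) m : wf D -> wf D' ->
  (forall i, gw D' i =i gw D i) -> {in crossings D, gsg D' =1 gsg D} ->
  (forall i p, p \in gw D i -> inlab D' i p = inlab D i p + shift p) ->
  (forall c, shift (c, true) = shift (c, false)) ->
  pcoef D m = pcoef D' m.
Proof.
move=> wfD wfD' gwE gsgD' inlabE balanced.
have perm : perm_eq (crossings D') (crossings D).
  by apply: uniq_perm; rewrite ?undup_uniq //; apply: eq_crossings.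
rewrite !pcoefE (perm_big _ perm); apply: eq_big_seq => c cD.
have [[i ci] [j cj]] := wf_crossing_passages wfD cD.
apply/esym/(pcoef_term_eq m wfD wfD' (gsgD' c cD) ci _ cj); rewrite ?gwE //.
by rewrite !inlabE // balanced opprD addrACA subrr addr0.
Qed.

Lemma swap_shift_oriented (F : passage -> int) (o : bool) a b p :
  swap_shift F (if o then a else b) (if o then b else a) p = pm o * swap_shift F a b p.
Proof. by case: o; [rewrite mul1r | rewrite mulN1r swap_shiftC]. Qed.

Lemma pm_cycle (x y z o1 o2 o3 : bool) :
  pm o2 * pm x = pm o3 * pm y -> pm o2 * pm z = pm o1 * pm y -> pm o1 * pm x = pm o3 * pm z.
Proof. by case: x; case: y; case: z; case: o1; case: o2; case: o3. Qed.

(* The last two hypotheses are the sign condition of R3. *)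
Lemma r3_shift_balanced n (D : gdiag n) x y z (o1 o2 o3 : bool) c : x != y -> y != z -> x != z ->
  pm o2 * sg D x = pm o3 * sg D y -> pm o2 * sg D z = pm o1 * sg D y ->
  let shift p := pm o1 * swap_shift (dch D) (x, true) (y, true) p
               + pm o2 * swap_shift (dch D) (x, false) (z, true) p
               + pm o3 * swap_shift (dch D) (y, false) (z, false) p in
  shift (c, true) = shift (c, false).
Proof.
move=> xy yz xz s1 s2 /=; have s3 := pm_cycle s1 s2.
rewrite /swap_shift /dch /= !xpair_eqE /= ?andbT ?andbF.
have [-> | cx] := eqVneq c x.
  by rewrite (negbTE xy) (negbTE xz) !(subr0, sub0r, mulr0, addr0, add0r, mulrN) s2.
have [-> | cy] := eqVneq c y.
  by rewrite (negbTE yz) !(subr0, sub0r, opprK, mulr0, addr0, add0r, mulrN) s3.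
have [_ | cz] := eqVneq c z.
  by rewrite !(subr0, sub0r, mulr0, addr0, add0r, mulrN) s1.
by rewrite !(subr0, mulr0, addr0).
Qed.

Lemma r3_passages_uniq (x y z : nat) (o1 o2 o3 : bool) : x != y -> y != z -> x != z ->
  uniq [:: if o1 then (x, true) else (y, true); if o1 then (y, true) else (x, true);
           if o2 then (x, false) else (z, true); if o2 then (z, true) else (x, false);
           if o3 then (y, false) else (z, false); if o3 then (z, false) else (y, false)].
Proof.
move=> xy yz xz; have yx : (y == x) = false by rewrite eq_sym; apply/negbTE.
have zy : (z == y) = false by rewrite eq_sym; apply/negbTE.
have zx : (z == x) = false by rewrite eq_sym; apply/negbTE.
by case: o1; case: o2; case: o3; rewrite /= !inE !xpair_eqE /= ?andbT ?andbF
  ?(negbTE xy) ?(negbTE yz) ?(negbTE xz) ?yx ?zy ?zx.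
Qed.

Lemma r3step_pcoef n (D D' : gdiag n) m : wf D -> wf D' -> r3step D D' -> pcoef D m = pcoef D' m.
Proof.
move=> wfD wfD' [i1 [i2 [i3 [k1 [k2 [k3 [x [y [z [/and3P [xy yz xz]]]]]]]]]]].
move=> [seg1 [seg2 [seg3 [/= [s1 s2] [gwD' gsgD']]]]].
have ne1 : (x, true) != (y, true) by rewrite xpair_eqE andbT.
have ne2 : (x, false) != (z, true) by rewrite xpair_eqE andbF.
have ne3 : (y, false) != (z, false) by rewrite xpair_eqE andbT.
have /= c1 := seg_consec (wf_uniq wfD i1) ne1 seg1.
have /= c2 := seg_consec (wf_uniq wfD i2) ne2 seg2.
have /= c3 := seg_consec (wf_uniq wfD i3) ne3 seg3.
set o1 := _ == (x, true) in s2 c1; set o2 := _ == (x, false) in s1 s2 c2.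
set o3 := _ == (y, false) in s1 c3.
pose shift p := pm o1 * swap_shift (dch D) (x, true) (y, true) p
              + pm o2 * swap_shift (dch D) (x, false) (z, true) p
              + pm o3 * swap_shift (dch D) (y, false) (z, false) p.
have at_comp i (l : 'I_n) k a b : consec (gw D l) k a b -> i == l -> consec (gw D i) k a b.
  by move=> ? /eqP ->.
have swapE i := swp_if3_consec int (wf_uniq wfD i) (r3_passages_uniq o1 o2 o3 xy yz xz)
  (at_comp i _ _ _ _ c1) (at_comp i _ _ _ _ c2) (at_comp i _ _ _ _ c3).
apply: (@pcoef_shift n D D' shift m wfD wfD' _ gsgD') => [i | i p pi | c].
- by rewrite gwD'; apply: perm_mem (swapE i).1.
- rewrite /inlab gwD' (@eq_prefix_sum _ _ _ (dch D)) => [|q]; last first.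
    by rewrite (perm_mem (swapE i).1) => qi; apply/dch_congr/gsgD'/(mem_crossings qi).
  rewrite (swapE i).2 // (wf_guarded_swap_shift wfD _ pi c1) (wf_guarded_swap_shift wfD _ pi c2).
  by rewrite (wf_guarded_swap_shift wfD _ pi c3) !swap_shift_oriented !addrA.
exact: r3_shift_balanced.
Qed.

Lemma rstep_pcoef n (D D' : gdiag n) m : wf D -> wf D' -> rstep D D' -> pcoef D m = pcoef D' m.
Proof.
by move=> wfD wfD' [|[]]; [apply: r1step_pcoef | apply: r2step_pcoef | apply: r3step_pcoef].
Qed.

Lemma rmove_pcoef n (D D' : gdiag n) m : rmove D D' -> pcoef D m = pcoef D' m.
Proof. by case=> wfD [wfD' [/(rstep_pcoef m wfD wfD') | /(rstep_pcoef m wfD' wfD) ->]]. Qed.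

Theorem proposition4 :
  (forall (n : nat) (D D' : gdiag n),
      wf D -> compatible D ->
      clos_refl_sym_trans (gdiag n) rmove D D' ->
      forall m : mono, pcoef D m = pcoef D' m) /\
  (forall (n : nat) (D : gdiag n),
      wf D -> compatible D ->
      forall e : linform, spec (pcoef D) e = kpoly lcst (fun i => lvar i false + lvar i true) D e) /\
  (forall (K : gdiag 1) (s : int),
      wf K -> forall m : mono, pcoef K m = embed1 (kpoly id (fun _ => s) K) m).
Proof.
split; [|split].
- move=> n D D' _ _ moves m.
  elim: moves => [? ? /rmove_pcoef | | ? ? _ -> | ? ? ? _ -> _ ->] //.
- by move=> n D wfD _ e; apply: spec_pcoef.
- by move=> K s wfK m; apply: pcoef_knot.
Qed.
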